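(* Let $M$ be a generalized modularity matrix on $V$ such that $M\mathbb{1}=0$, with induced modularity function $Q$. Let $\{S_1,\dots,S_p\}$ be a partition of $V$ into pairwise disjoint nonempty subsets such that $Q(S_i)>0$ for all $i$ and $Q(S_i,S_j)<0$ for all $i\ne j$. Then $M$ has at least $p-1$ positive eigenvalues (counted with multiplicity).
   Context: Let $V=\{1,\dots,n\}$ and let $A\in\mathbb{R}^{n\times n}$ be the adjacency matrix of an undirected connected weighted graph on $V$, possibly with loops, i.e. $A$ is symmetric, entrywise nonnegative and irreducible. A generalized modularity matrix is any matrix $M=A+\Delta-\sigma vv^{\mathsf T}$ where $\Delta$ is a real diagonal matrix, $v\ne0$ is entrywise nonnegative, and $\sigma>0$. $\mathbb{1}$ is the all-ones vector and $\mathbb{1}_S$ the characteristic vector of $S\subseteq V$; $Q(S)=\mathbb{1}_S^{\mathsf T}M\mathbb{1}_S$, and for disjoint $S,T$, $Q(S,T)=\mathbb{1}_S^{\mathsf T}M\mathbb{1}_T$. *)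

From HB Require Import structures.
From mathcomp Require Import all_boot all_order all_algebra.
Set Implicit Arguments. Unset Strict Implicit. Unset Printing Implicit Defensive.
Import Order.TTheory GRing.Theory Num.Theory.
Local Open Scope ring_scope.

(* A is the adjacency matrix of an undirected connected weighted graph
   (possibly with loops): symmetric, entrywise nonnegative, irreducible
   (= the graph with edges {i,j : A i j <> 0} is connected). *)
Definition is_adjacency (R : numDomainType) (n : nat) (A : 'M[R]_n) : Prop :=
  [/\ A^T = A,
      (forall i j, 0 <= A i j) &
      (forall i j, connect (fun a b : 'I_n => A a b != 0) i j)].

Definition gen_modularity (R : numDomainType) (n : nat)
    (A : 'M[R]_n) (d : 'rV[R]_n) (sigma : R) (v : 'cV[R]_n) : 'M[R]_n :=
  A + diag_mx d - sigma *: (v *m v^T).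

Definition charvec (R : numDomainType) (n : nat) (S : {set 'I_n}) : 'cV[R]_n :=
  \col_i (if i \in S then 1 else 0).

Definition Qmod (R : numDomainType) (n : nat) (M : 'M[R]_n) (S : {set 'I_n}) : R :=
  ((charvec R S)^T *m M *m charvec R S) 0 0.

Definition Qmod2 (R : numDomainType) (n : nat) (M : 'M[R]_n)
    (S T : {set 'I_n}) : R :=
  ((charvec R S)^T *m M *m charvec R T) 0 0.

(* M has at least k positive eigenvalues counted with (algebraic) multiplicity:
   there are k positive reals x_1..x_k (repetitions allowed) such that
   prod (X - x_i) divides the characteristic polynomial of M. *)
Definition at_least_pos_eigs (R : numFieldType) (n : nat) (M : 'M[R]_n)
    (k : nat) : Prop :=
  exists s : seq R, [/\ size s = k, all (fun x => 0 < x) s &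
     (\prod_(x <- s) ('X - x%:P)) %| char_poly M].

From HB Require Import structures.
From mathcomp Require Import all_boot all_order all_algebra spectral.
From mathcomp Require Import complex ring.
Import Order.TTheory GRing.Theory Num.Theory.
Local Open Scope ring_scope.

(* Let G be the Gram matrix (Q(S_i, S_j))_{i,j < p-1} of the first p-1 parts.
   Since M 1 = 0, each row of the full p x p matrix (Q(S_i, S_j)) sums to 0,
   so G has negative off-diagonal entries and positive row sums; being
   symmetric and diagonally dominant, it is positive definite.  Hence the
   quadratic form of M is positive definite on the (p-1)-dimensional span of
   1_{S_1}, ..., 1_{S_{p-1}}, which must then meet the span of the
   eigenvectors of nonpositive eigenvalues trivially: a dimension count
   leaves at least p-1 positive eigenvalues.  Only the symmetry of M,
   M 1 = 0 and the signs of the Q(S_i, S_j) are used. *)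

Section DiagonallyDominant.
Variables (C : numClosedFieldType) (q : nat) (G : 'M[C]_q).
Hypothesis G_sym : G^T = G.

Lemma sym_form_decomposition (a : 'I_q -> C) :
  (\sum_i \sum_j G i j * (a i * (a j)^*)) *+ 2 =
    (\sum_i (\sum_j G i j) * (a i * (a i)^*)) *+ 2
    + \sum_i \sum_j - G i j * ((a i - a j) * (a i - a j)^*).
Proof.
have GC i j : G i j = G j i by rewrite -{1}G_sym mxE.
set T := \sum_i _; set rowT := \sum_i _ * _.
have sum_i : \sum_i \sum_j G i j * (a i * (a i)^*) = rowT.
  by apply: eq_bigr => i _; rewrite mulr_suml.
have sum_j : \sum_i \sum_j G i j * (a j * (a j)^*) = rowT.
  rewrite exchange_big; apply: eq_bigr => i _; rewrite mulr_suml.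
  by apply: eq_bigr => j _; rewrite GC.
have sum_conj : \sum_i \sum_j G i j * (a j * (a i)^*) = T.
  rewrite exchange_big; apply: eq_bigr => i _.
  by apply: eq_bigr => j _; rewrite GC.
have -> : \sum_i \sum_j - G i j * ((a i - a j) * (a i - a j)^*) =
    \sum_i \sum_j (G i j * (a i * (a j)^*) + G i j * (a j * (a i)^*)
      - G i j * (a i * (a i)^*) - G i j * (a j * (a j)^*)).
  by apply: eq_bigr => i _; apply: eq_bigr => j _; rewrite rmorphB /=; ring.
under eq_bigr do rewrite !sumrB big_split /=.
by rewrite !sumrB big_split /= sum_i sum_j sum_conj -/T; ring.
Qed.

Local Open Scope sesquilinear_scope.

Lemma diag_dominant_form_gt0 (c : 'rV[C]_q) :
  (forall i j, i != j -> G i j <= 0) -> (forall i, 0 < \sum_j G i j) ->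
  c != 0 -> 0 < (c *m G *m c ^t*) 0 0.
Proof.
move=> G_offdiag G_rowsum c_neq0; set a := fun i => c 0 i.
have -> : (c *m G *m c ^t*) 0 0 = \sum_i \sum_j G i j * (a i * (a j)^*).
  rewrite mxE exchange_big; apply: eq_bigr => j _; rewrite !mxE mulr_suml.
  by apply: eq_bigr => i _; rewrite /a; ring.
rewrite -(pmulrn_lgt0 _ (ltn0Sn 1)) sym_form_decomposition; apply: ltr_wpDr.
  apply: sumr_ge0 => i _; apply: sumr_ge0 => j _.
  have [->|ij] := eqVneq i j; first by rewrite subrr rmorph0 !mulr0.
  by rewrite mulr_ge0 ?mul_conjC_ge0 // oppr_ge0 G_offdiag.
have [i0 ai0] : exists i, a i != 0.
  apply/existsP; apply: contraR c_neq0; rewrite negb_exists => /forallP ai0.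
  by apply/eqP/rowP => i; rewrite mxE; apply/eqP; rewrite -[_ == _]negbK ai0.
rewrite pmulrn_lgt0 // (bigD1 i0) //= ltr_pwDl //.
  by rewrite mulr_gt0 ?mul_conjC_gt0.
by apply: sumr_ge0 => i _; rewrite mulr_ge0 ?mul_conjC_ge0 ?ltW.
Qed.

End DiagonallyDominant.

Lemma rank_add_le_of_trivial_meet (F : fieldType) m1 m2 n
    (X : 'M[F]_(m1, n)) (Y : 'M[F]_(m2, n)) :
  (forall (c : 'rV_m1) (u : 'rV_m2), c *m X = u *m Y -> c = 0) ->
  (m1 + \rank Y <= n)%N.
Proof.
move=> meet0.
have rankX : \rank X = m1.
  have kerX : kermx X = 0.
    apply/row_matrixP => r; rewrite row0; apply: (meet0 _ 0).
    by rewrite mul0mx -row_mul mulmx_ker row0.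
  by apply/eqP; rewrite eqn_leq rank_leq_row -subn_eq0 -mxrank_ker kerX mxrank0.
have capXY : (X :&: Y)%MS = 0.
  apply/eqP; rewrite -submx0; apply/row_subP => r; rewrite submx0.
  have /submxP [c cX] : (row r (X :&: Y) <= X)%MS.
    exact: submx_trans (row_sub _ _) (capmxSl _ _).
  have /submxP [u uY] : (row r (X :&: Y) <= Y)%MS.
    exact: submx_trans (row_sub _ _) (capmxSr _ _).
  by rewrite cX (meet0 c u) ?mul0mx // -cX -uY.
by rewrite -{1}rankX -mxrank_disjoint_sum // rank_leq_col.
Qed.

Lemma char_poly_similar (F : fieldType) n (P B : 'M[F]_n) :
  P \in unitmx -> char_poly (invmx P *m B *m P) = char_poly B.
Proof.
move=> P_unit; rewrite /char_poly /char_poly_mx.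
set Pc := map_mx polyC P.
have Pc_unit : Pc \in unitmx by rewrite map_unitmx.
rewrite !map_mxM map_invmx -/Pc.
have -> : 'X%:M - invmx Pc *m map_mx polyC B *m Pc
    = invmx Pc *m ('X%:M - map_mx polyC B) *m Pc.
  by rewrite mulmxBr mulmxBl mul_mx_scalar -scalemxAl mulVmx // scalemx1.
by rewrite !det_mulmx det_inv mulrAC mulVr ?mul1r.
Qed.

Definition spectral_npos {C : numClosedFieldType} {n} (H : 'M[C]_n) : nat :=
  #|[set i | 0 < spectral_diag H 0 i]|.

Section Spectral.
Variable C : numClosedFieldType.
Local Open Scope sesquilinear_scope.

Lemma rowsub_unitarymx n k (P : 'M[C]_n) (f : 'I_k -> 'I_n) :
  P \is unitarymx -> injective f -> rowsub f P \is unitarymx.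
Proof.
move=> /row_unitarymxP P_unitary f_inj; apply/row_unitarymxP => i j.
by rewrite !row_rowsub P_unitary (inj_eq f_inj).
Qed.

Lemma form_le0_on_nonpos_eigvecs n k (P : 'M[C]_n) (D : 'rV[C]_n)
    (f : 'I_k -> 'I_n) (u : 'rV[C]_k) :
  P \is unitarymx -> (forall a, D 0 (f a) <= 0) ->
  (u *m rowsub f P *m (invmx P *m diag_mx D *m P) *m (u *m rowsub f P) ^t*) 0 0
    <= 0.
Proof.
move=> /unitarymxP P_unitary D_le0.
rewrite invmx_unitary; last exact/unitarymxP.
rewrite rowsubE mulmxA trmx_mul map_mxM !mulmxA.
rewrite -[_ *m P *m P ^t*]mulmxA P_unitary mulmx1.
rewrite -[_ *m P *m P ^t*]mulmxA P_unitary mulmx1.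
rewrite mul_mx_diag mxE; apply: sumr_le0 => l _; rewrite !mxE.
have [Dl_le0|Dl_gt0] := boolP (D 0 l <= 0).
  by rewrite mulrAC mulr_ge0_le0 ?mul_conjC_ge0.
suff -> : \sum_j u 0 j * rowsub f 1%:M j l = 0 by rewrite !mul0r.
apply: big1 => a _; rewrite !mxE.
by have [fa|] := eqVneq (f a) l; [rewrite -fa D_le0 in Dl_gt0 | rewrite mulr0].
Qed.

Lemma hermitian_pos_spectral_count n q (H : 'M[C]_n) (X : 'M[C]_(q, n)) :
  H \is hermsymmx ->
  (forall c : 'rV_q, c != 0 -> 0 < (c *m X *m H *m (c *m X) ^t*) 0 0) ->
  (q <= spectral_npos H)%N.
Proof.
rewrite /spectral_npos => H_herm X_pos.
set D := spectral_diag H; set P := spectralmx H.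
set N := ~: [set i | 0 < D 0 i].
have P_unitary : P \is unitarymx by exact: spectral_unitarymx.
have HE : H = invmx P *m diag_mx D *m P.
  exact/orthomx_spectralP/hermitian_normalmx.
pose f : 'I_#|N| -> 'I_n := enum_val.
have D_le0 a : D 0 (f a) <= 0.
  have := enum_valP a; rewrite !inE => /negbTE D_gt0F.
  have /mxOverP D_real := hermitian_spectral_diag_real H_herm.
  by rewrite real_leNgt ?real0 ?D_gt0F.
have rankY : \rank (rowsub f P) = #|N|.
  by apply/mxrank_unitary/rowsub_unitarymx => //; exact: enum_val_inj.
suff : (q + #|N| <= n)%N.
  by move=> le_n; rewrite -(leq_add2r #|N|) cardsC card_ord.
rewrite -rankY; apply: (@rank_add_le_of_trivial_meet _ _ _ _ X) => c u cXE.
apply/eqP/contraT => /X_pos; rewrite cXE HE => /lt_geF <-.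
exact: form_le0_on_nonpos_eigvecs u P_unitary D_le0.
Qed.

End Spectral.

Section RealSymmetric.
Variables (R : rcfType) (n : nat) (M : 'M[R]_n).
Hypothesis M_sym : M^T = M.
Local Notation Mc := (map_mx (real_complex R) M).

Lemma realsym_complex_hermsym : Mc \is hermsymmx.
Proof.
apply: realsym_hermsym.
  by apply/is_hermitianmxP; rewrite expr0 scale1r map_mx_id // map_trmx M_sym.
by apply/mxOverP => i j; rewrite mxE; apply/complex_realP; eexists.
Qed.

Lemma at_least_pos_eigs_realsym k :
  (k <= spectral_npos Mc)%N -> at_least_pos_eigs M k.
Proof.
rewrite /spectral_npos => k_le.
set D := spectral_diag Mc; set Pos := [set i | _] in k_le *.
have D_real i : D 0 i \is Num.real.
  exact: mxOverP (hermitian_spectral_diag_real realsym_complex_hermsym) _ _.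
have ReDK i : ((complex.Re (D 0 i))%:C)%C = D 0 i by rewrite RRe_real.
pose s := [seq complex.Re (D 0 i) | i <- enum Pos].
exists (take k s); split.
- by rewrite size_takel // size_map -cardE.
- apply/allP => x /mem_take x_s; case/mapP: x_s => i.
  by rewrite mem_enum inE => Di_gt0 ->; rewrite -ltcR ReDK.
apply: (@dvdp_trans _ (\prod_(x <- s) ('X - x%:P))).
  by rewrite -{2}(cat_take_drop k s) big_cat /= dvdp_mulIl.
rewrite -(dvdp_map (real_complex R)) map_prod_XsubC map_char_poly.
rewrite (orthomx_spectralP (hermitian_normalmx realsym_complex_hermsym)).
rewrite char_poly_similar ?spectral_unit //.
rewrite char_poly_trig ?diag_mx_is_trig // (bigID (mem Pos)) /= dvdp_mulr //.
rewrite big_map big_enum /= -/D.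
under eq_bigr do rewrite ReDK.
by under [X in _ %| X]eq_bigr do rewrite mxE eqxx mulr1n.
Qed.

End RealSymmetric.

Lemma gen_modularity_sym (R : numDomainType) n (A : 'M[R]_n) d sigma v :
  A^T = A -> (gen_modularity A d sigma v)^T = gen_modularity A d sigma v.
Proof.
move=> A_sym; rewrite /gen_modularity linearB linearD /= tr_diag_mx linearZ /=.
by rewrite trmx_mul trmxK A_sym.
Qed.

Section Partition.
Variables (R : rcfType) (n q : nat) (M : 'M[R]_n) (S : 'I_q.+1 -> {set 'I_n}).
Hypotheses (M_sym : M^T = M) (M1 : M *m (const_mx 1 : 'cV[R]_n) = 0).
Hypothesis S_disj : forall i j, i != j -> [disjoint S i & S j].
Hypothesis S_cover : \bigcup_(i < q.+1) S i = [set: 'I_n].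
Hypothesis Q_offdiag : forall i j, i != j -> Qmod2 M (S i) (S j) < 0.

Local Notation w := (widen_ord (leqnSn q)).

Lemma sum_charvec_partition : \sum_i charvec R (S i) = const_mx 1.
Proof.
apply/colP => k; rewrite summxE !mxE.
have /bigcupP [i0 _ k_i0] : k \in \bigcup_(i < q.+1) S i by rewrite S_cover inE.
rewrite (bigD1 i0) //= mxE k_i0 big1 ?addr0 // => j j_i0; rewrite mxE.
by rewrite (disjointFr (S_disj _ _ _) k_i0) // eq_sym.
Qed.

Lemma Qmod2_partition_sum T : \sum_i Qmod2 M T (S i) = 0.
Proof.
rewrite /Qmod2 -summxE -mulmx_sumr sum_charvec_partition -mulmxA M1.
by rewrite mulmx0 mxE.
Qed.

(* Rows are the characteristic vectors of the first q parts; the last part is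
   left out so that the rows of the Gram matrix have positive sums. *)
Definition part_charmx : 'M[R]_(q, n) :=
  \matrix_(i, j) charvec R (S (w i)) j 0.

Lemma part_gram_entry i j :
  (part_charmx *m M *m part_charmx^T) i j = Qmod2 M (S (w i)) (S (w j)).
Proof.
rewrite /Qmod2 !mxE; apply: eq_bigr => k _; rewrite !mxE; congr (_ * _).
by apply: eq_bigr => l _; rewrite !mxE.
Qed.

Lemma part_gram_row_sum_gt0 i :
  0 < \sum_j (part_charmx *m M *m part_charmx^T) i j.
Proof.
have := Qmod2_partition_sum (S (w i)); rewrite big_ord_recr /= => /eqP.
rewrite addr_eq0 => /eqP; under eq_bigr do rewrite -part_gram_entry.
move=> ->; rewrite oppr_gt0 Q_offdiag //.
by rewrite -val_eqE /= neq_ltn ltn_ord.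
Qed.

Local Open Scope sesquilinear_scope.

Local Notation X := (map_mx (real_complex R) part_charmx).

Lemma part_charmx_form_gt0 (c : 'rV[R[i]]_q) :
  c != 0 -> 0 < (c *m X *m map_mx (real_complex R) M *m (c *m X) ^t*) 0 0.
Proof.
move=> c_neq0.
have Xt : X ^t* = map_mx (real_complex R) part_charmx^T.
  by apply/matrixP => i j; rewrite !mxE; exact: conjc_real.
have -> : c *m X *m map_mx (real_complex R) M *m (c *m X) ^t* =
    c *m map_mx (real_complex R) (part_charmx *m M *m part_charmx^T) *m c ^t*.
  by rewrite trmx_mul map_mxM Xt !map_mxM !mulmxA.
apply: diag_dominant_form_gt0 => //.
- by rewrite map_trmx !trmx_mul trmxK M_sym mulmxA.
- move=> i j ij; rewrite mxE lecR part_gram_entry ltW // Q_offdiag //.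
- move=> i; under eq_bigr do rewrite mxE.
  by rewrite -rmorph_sum ltcR part_gram_row_sum_gt0.
Qed.

End Partition.

Theorem mainTheorem11 (R : rcfType) (n p : nat)
    (A : 'M[R]_n) (d : 'rV[R]_n) (sigma : R) (v : 'cV[R]_n)
    (S : 'I_p -> {set 'I_n}) :
  is_adjacency A ->
  (forall i, 0 <= v i 0) -> v != 0 -> 0 < sigma ->
  let M := gen_modularity A d sigma v in
  M *m (const_mx 1 : 'cV[R]_n) = 0 ->
  (forall i, S i != set0) ->
  (forall i j, i != j -> [disjoint S i & S j]) ->
  \bigcup_(i < p) S i = [set: 'I_n] ->
  (forall i, 0 < Qmod M (S i)) ->
  (forall i j, i != j -> Qmod2 M (S i) (S j) < 0) ->
  at_least_pos_eigs M p.-1.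
Proof.
move=> [A_sym _ _] _ _ _ M M1 _ S_disj S_cover _ Q_offdiag.
case: p S S_disj S_cover Q_offdiag => [|q] S S_disj S_cover Q_offdiag.
  by exists [::]; rewrite big_nil dvd1p.
have M_sym : M^T = M by exact: gen_modularity_sym.
apply: at_least_pos_eigs_realsym => //.
apply: hermitian_pos_spectral_count; first exact: realsym_complex_hermsym.
exact: (@part_charmx_form_gt0 _ _ _ _ _ M_sym M1 S_disj S_cover Q_offdiag).
Qed.
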